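(* Assume $k=3$. (1) If $r=e-3$, then $b=(l_1+l_2+2)(e-2)+h-2(p+1)$. Moreover, if $p<l_1+l_2+2$ then $b\ge(l_1+l_2+2)(e-4)+h$ with $h\ge0$; if $p=l_1+l_2+2$ then $b=(l_1+l_2+2)(e-4)+h-2$ with $h>0$. (2) If $r=e-2$, then $b=(l_1+l_2+2)(e-1)+h-p-1$ and $p\le2l_1+2$; further, $p=2l_1+2$ implies $h>0$. (3) If $r=e-1$, then $b=(l_1+l_2+2)e+h$.
   Context: Let $(R,\mathfrak m)$ be a one-dimensional local Noetherian domain with quotient field $K$, not regular, analytically irreducible (the integral closure $\overline R$ of $R$ in $K$ is a DVR and a finite $R$-module) and residually rational. Let $v$ be the valuation of $\overline R$ normalized so a uniformizer $t$ has value 1, $v(R)=\{v(a):a\in R\setminus\{0\}\}$, $\mathfrak C=(R:_K\overline R)=t^c\overline R$ with $c$ the least element of $v(R)$ with $c+\mathbb N\subseteq v(R)$, $\delta=\ell_R(\overline R/R)$, $r=\ell_R((R:_K\mathfrak m)/R)$, $b=(c-\delta)r-\delta$, $e$ the least positive element of $v(R)$. Let $x\in\mathfrak m$ with $v(x)=e$ and $k=\ell_R(R/(\mathfrak C+xR))$. Let $p$ be the integer with $c-e\le pe<c$ and $h=(p+1)e-c$. When $k=3$, $y_1<y_2$ are the elements $y\in v(R)$ with $0<y<c$ and $y-e\notin v(R)$, and $l_i\ge0$ is the integer with $y_i+l_ie<c\le y_i+(l_i+1)e$. *)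

From HB Require Import structures.
From mathcomp Require Import all_boot all_order all_algebra.
Set Implicit Arguments. Unset Strict Implicit. Unset Printing Implicit Defensive.
Import Order.TTheory GRing.Theory Num.Theory.
Local Open Scope ring_scope.

Section Defs.
Variable K : fieldType.

Definition is_subring (R : K -> Prop) : Prop :=
  [/\ R 0, R 1, (forall a b, R a -> R b -> R (a - b))
    & (forall a b, R a -> R b -> R (a * b))].

Definition is_quotient_field (R : K -> Prop) : Prop :=
  forall z, exists a b, [/\ R a, R b, b != 0 & z = a / b].

(* v is a discrete valuation of K normalized so that a uniformizer has value 1;
   the value of 0 is irrelevant (never used). *)
Definition is_normalized_discrete_valuation (v : K -> int) : Prop :=
  [/\ (forall x y, x != 0 -> y != 0 -> v (x * y) = v x + v y),
      (forall x y, x != 0 -> y != 0 -> x + y != 0 ->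
                   Num.min (v x) (v y) <= v (x + y))
    & (exists t, t != 0 /\ v t = 1)].

Definition val_ring (v : K -> int) (z : K) : Prop := z = 0 \/ 0 <= v z.

Definition integral_over (R : K -> Prop) (z : K) : Prop :=
  exists P : {poly K}, [/\ P \is monic, (forall i, R P`_i) & root P z].

Definition integral_closure_is (R : K -> Prop) (V : K -> Prop) : Prop :=
  forall z, integral_over R z <-> V z.

Definition finite_Rmodule (R M : K -> Prop) : Prop :=
  exists (n : nat) (g : 'I_n -> K),
    forall z, M z <-> exists a : 'I_n -> K, (forall i, R (a i)) /\ z = \sum_(i < n) a i * g i.

Definition Runit (R : K -> Prop) (a : K) : Prop := exists b, R b /\ a * b = 1.
Definition max_ideal (R : K -> Prop) (a : K) : Prop := R a /\ ~ Runit R a.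

Definition is_local (R : K -> Prop) : Prop :=
  (forall a b, max_ideal R a -> max_ideal R b -> max_ideal R (a + b)) /\
  (forall a b, R a -> max_ideal R b -> max_ideal R (a * b)).

Definition regular_dim1 (R : K -> Prop) : Prop :=
  exists t, max_ideal R t /\
    forall a, max_ideal R a <-> exists b, R b /\ a = t * b.

(* residually rational: R/m -> Rbar/m_Rbar is onto (the residue fields agree) *)
Definition residually_rational (R : K -> Prop) (v : K -> int) : Prop :=
  forall u, val_ring v u -> exists a, R a /\ (u - a = 0 \/ 0 < v (u - a)).

Definition is_submodule (R M : K -> Prop) : Prop :=
  [/\ M 0, (forall a b, M a -> M b -> M (a + b))
    & (forall r a, R r -> M a -> M (r * a))].

Definition subsetK (M N : K -> Prop) : Prop := forall z, M z -> N z.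
Definition ssubsetK (M N : K -> Prop) : Prop := subsetK M N /\ ~ subsetK N M.
Definition eqK (M N : K -> Prop) : Prop := forall z, M z <-> N z.

(* length_R(M/N) = n : there is a composition series
   N = M_0 < M_1 < ... < M_n = M of R-submodules of K
   (by Jordan--Hoelder, n is then the length). *)
Definition length_is (R M N : K -> Prop) (n : nat) : Prop :=
  exists ch : nat -> (K -> Prop),
    [/\ eqK (ch 0%N) N, eqK (ch n) M,
        (forall i, (i <= n)%N -> is_submodule R (ch i)),
        (forall i, (i < n)%N -> ssubsetK (ch i) (ch i.+1))
      & (forall i L, (i < n)%N -> is_submodule R L ->
           subsetK (ch i) L -> subsetK L (ch i.+1) ->
           eqK L (ch i) \/ eqK L (ch i.+1))].

Definition colon (R I : K -> Prop) (z : K) : Prop := forall a, I a -> R (z * a).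

Definition sum_C_xR (R C : K -> Prop) (x : K) (z : K) : Prop :=
  exists a b, [/\ C a, R b & z = a + x * b].

Definition in_valR (R : K -> Prop) (v : K -> int) (n : int) : Prop :=
  exists a, [/\ R a, a != 0 & v a = n].

End Defs.

From Stdlib Require Import Classical ClassicalEpsilon.
From mathcomp Require Import all_boot all_order all_algebra.
From mathcomp Require Import zify ring.
Set Implicit Arguments. Unset Strict Implicit. Unset Printing Implicit Defensive.
Import Order.TTheory GRing.Theory Num.Theory.

(* Lengths are read off values.  A step A < B of a composition series of R-submodules of K
   adds at most one value, and, if A already contains everything of value >= c, at least one
   value below c.  Hence delta = c - #(v(R) ∩ [0, c)) and
   r >= #(v(R : m) ∩ [0, c)) - #(v(R) ∩ [0, c)).
   Since k = 3, the values of R below c are the progressions 0 + eN, y1 + eN, y2 + eN cut at c,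
   of lengths p + 1, l1 + 1, l2 + 1, and their last terms are the only values of R in
   [c - e, c).  The colon (R : m) contains t^s for c - e <= s < c, and f / x with v f = y_i as
   soon as c <= y_i + y1 - e; so r >= e - 3, and r >= e - 2 or e - 1 when one or both of the
   values y_i - e are reached.  The three cases are then arithmetic. *)

Lemma count_mem_subset (T : eqType) (s t : seq T) :
  uniq s -> uniq t -> {subset t <= s} -> count (mem t) s = size t.
Proof.
move=> us ut ts; rewrite -size_filter; apply/perm_size/uniq_perm => //.
  exact: filter_uniq.
by move=> y; rewrite mem_filter andb_idr //; apply: ts.
Qed.

Lemma count_subpred (T : Type) (a b : pred T) (s : seq T) : subpred a b ->
  count b s = count a s + count (predD b a) s.
Proof.
move=> ab; elim: s => //= x s ->.
by case: (boolP (a x)) => [ax | nax]; rewrite /= ?(ab _ ax) ?ax ?(negbTE nax) /=; lia.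
Qed.

Lemma count_le1 (T : eqType) (a : pred T) (s : seq T) : uniq s ->
  {in s &, forall x y, a x -> a y -> x = y} -> count a s <= 1.
Proof.
move=> us eq_a; rewrite -size_filter; case def_s: (filter a s) => [|x t] //.
have xs : x \in filter a s by rewrite def_s mem_head.
rewrite -def_s (@uniq_leq_size _ _ [:: x]) ?filter_uniq // => y ys; rewrite inE.
by move: xs ys; rewrite !mem_filter => /andP [ax xs] /andP [ay ys]; rewrite (eq_a y x).
Qed.

Lemma count_iota_ge m n : count (leq m) (iota 0 n) = n - m.
Proof.
elim: n => [|n IH] //.
by rewrite -addn1 iotaD count_cat IH /= add0n addn0; case: (leqP m n) => h; lia.
Qed.

Section ThreeChains.
Variables (S : pred nat) (E C P Y1 Y2 L1 L2 : nat).
Hypotheses (S0 : S 0) (SE : S E) (SD : forall a b, S a -> S b -> S (a + b)).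
Hypotheses (E_gt0 : 0 < E) (SY1 : S Y1) (SY2 : S Y2) (Y1_gt0 : 0 < Y1) (Y12 : Y1 < Y2).
Hypothesis apery_Y1 : forall t, S t -> t + E != Y1.
Hypothesis apery_Y2 : forall t, S t -> t + E != Y2.
Hypothesis apery_below : forall s, S s -> 0 < s -> s < C ->
  (forall t, S t -> t + E != s) -> s = Y1 \/ s = Y2.
Hypotheses (top0 : C <= P * E + E < C + E) (top1 : C <= Y1 + L1 * E + E < C + E)
  (top2 : C <= Y2 + L2 * E + E < C + E).

Definition chain u l := [seq u + j * E | j <- iota 0 l.+1].

Definition chains := chain 0 P ++ chain Y1 L1 ++ chain Y2 L2.

Lemma S_mulE j : S (j * E).
Proof. by elim: j => [|j IH]; rewrite ?mul0n // mulSn SD. Qed.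

Lemma chainP u l s : reflect (exists2 j, j <= l & s = u + j * E) (s \in chain u l).
Proof.
apply: (iffP mapP) => [[j] | [j jl ->]]; last by exists j; rewrite // mem_iota.
by rewrite mem_iota => /andP [_ jl] ->; exists j.
Qed.

Lemma uniq_chain u l : uniq (chain u l).
Proof.
by rewrite map_inj_uniq ?iota_uniq // => i j /eqP; rewrite eqn_add2l eqn_mul2r gtn_eqF // => /eqP.
Qed.

Lemma S_chain u l s : S u -> s \in chain u l -> S s.
Proof. by move=> Su /chainP [j _ ->]; rewrite SD ?S_mulE. Qed.

Lemma chain_disjoint u w i j : S u -> u < w -> (forall t, S t -> t + E != w) ->
  u + i * E != w + j * E.
Proof.
move=> Su uw apery_w; apply/eqP => eq_uw.
have ji : j < i by move: eq_uw; nia.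
have /negP := apery_w (u + (i - j).-1 * E) (SD Su (S_mulE _)); apply; apply/eqP.
by move: eq_uw; rewrite -(subnKC ji); case: (i - j) => [|d] /=; nia.
Qed.

Lemma chains_below s : (s \in chains) = (s < C) && S s.
Proof.
apply/idP/idP.
  rewrite !mem_cat => /or3P [] /[dup] /chainP [j jl ->] sc; apply/andP; split;
    by [nia | apply: S_chain sc].
case/andP; elim/ltn_ind: s => s IH sC Ss; rewrite !mem_cat.
have [-> | s_gt0] := posnP s; first by have -> : 0 \in chain 0 P by apply/chainP; exists 0.
case: (boolP ((E <= s) && S (s - E))) => [/andP [Es SsE] | apery_s].
  have sE_lt : s - E < s by rewrite ltn_subrL E_gt0.
  have := IH _ sE_lt (leq_ltn_trans (leq_subr _ _) sC) SsE.
  rewrite !mem_cat => /or3P [] /chainP [j jl sE];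
    [have -> : s \in chain 0 P | have -> : s \in chain Y1 L1
    | have -> : s \in chain Y2 L2]; rewrite ?orbT //; apply/chainP; exists j.+1; nia.
have apery_s' t : S t -> t + E != s.
  by move=> St; apply: contraNneq apery_s => <-; rewrite leq_addl addnK.
case: (apery_below Ss s_gt0 sC apery_s') => ->;
  [have -> : Y1 \in chain Y1 L1 | have -> : Y2 \in chain Y2 L2];
  rewrite ?orbT //; apply/chainP; by exists 0; rewrite ?mul0n ?addn0.
Qed.

Lemma uniq_chains : uniq chains.
Proof.
have disj u w l m : S u -> u < w -> (forall t, S t -> t + E != w) ->
    ~~ has (mem (chain u l)) (chain w m).
  move=> Su uw apery_w; apply/hasPn => s /chainP [j _ ->].
  by apply/chainP => [[i _ /esym/eqP]]; apply/negP/chain_disjoint.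
by rewrite !cat_uniq has_cat negb_or !uniq_chain !disj // (ltn_trans Y1_gt0).
Qed.

Lemma perm_chains : perm_eq (filter S (iota 0 C)) chains.
Proof.
apply: uniq_perm; rewrite ?filter_uniq ?iota_uniq ?uniq_chains // => s.
by rewrite chains_below mem_filter mem_iota andbC.
Qed.

Lemma count_S : count S (iota 0 C) = P.+1 + L1.+1 + L2.+1.
Proof. by rewrite -size_filter (perm_size perm_chains) !size_cat !size_map !size_iota addnA. Qed.

Lemma count_top_chain u l : u + l * E < C <= u + l * E + E ->
  count (leq (C - E)) (chain u l) = 1.
Proof.
move=> top; rewrite count_map -addn1 iotaD count_cat /= add0n addn0.
rewrite (@eq_in_count _ _ pred0) ?count_pred0; last by move=> j; rewrite mem_iota /=; nia.
by rewrite (_ : C - E <= u + l * E) //; lia.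
Qed.

Lemma count_S_top : count (predI S (leq (C - E))) (iota 0 C) = 3.
Proof.
rewrite (eq_count (a2 := predI (leq (C - E)) S)) => [|s]; last exact: andbC.
rewrite -count_filter (permP perm_chains) !count_cat !count_top_chain //; lia.
Qed.

Lemma count_S_or_top : E <= C ->
  count (predU S (leq (C - E))) (iota 0 C) + 3 = P.+1 + L1.+1 + L2.+1 + E.
Proof.
move=> EC; rewrite -count_S_top count_predUI count_S count_iota_ge; lia.
Qed.

End ThreeChains.

Local Open Scope ring_scope.

Section Valuation.
Variables (K : fieldType) (v : K -> int).
Hypothesis hv : is_normalized_discrete_valuation v.

Lemma vM a b : a != 0 -> b != 0 -> v (a * b) = v a + v b.
Proof. by case: hv => + _ _; apply. Qed.

Lemma v1 : v 1 = 0.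
Proof. by have := @vM 1 1 (oner_neq0 _) (oner_neq0 _); rewrite mulr1; lia. Qed.

Lemma vV a : a != 0 -> v a^-1 = - v a.
Proof. by move=> a0; have := vM a0 (invr_neq0 a0); rewrite mulfV // v1; lia. Qed.

Lemma vN a : a != 0 -> v (- a) = v a.
Proof.
move=> a0; have N1 : (-1 : K) != 0 by rewrite oppr_eq0 oner_neq0.
have vN1 : v (-1) = 0 by have := vM N1 N1; rewrite mulrNN mulr1 v1; lia.
by rewrite -mulN1r vM // vN1 add0r.
Qed.

Lemma vX a n : a != 0 -> v (a ^+ n) = n%:Z * v a.
Proof.
move=> a0; elim: n => [|n IH]; first by rewrite expr0 v1 mul0r.
by rewrite exprS vM ?expf_neq0 // IH; lia.
Qed.

Lemma vD_ge a b n : a != 0 -> b != 0 -> a + b != 0 -> n <= v a -> n <= v b -> n <= v (a + b).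
Proof.
case: hv => _ + _ => vD a0 b0 ab0 na nb.
by apply: le_trans (vD _ _ a0 b0 ab0); rewrite le_min na nb.
Qed.

Lemma vD_lt a b : a != 0 -> b != 0 -> v a < v b -> a + b != 0 /\ v (a + b) = v a.
Proof.
move=> a0 b0 ab; have ab0 : a + b != 0.
  by rewrite addr_eq0; apply: contraTneq ab => ->; rewrite vN ?ltxx // -oppr_eq0.
split => //; apply/eqP; rewrite eq_le (vD_ge a0 b0 ab0 (lexx _) (ltW ab)) andbT.
rewrite leNgt; apply/negP => lt.
have b'0 : - b != 0 by rewrite oppr_eq0.
have := vD_ge ab0 b'0 (n := v a + 1); rewrite addrK vN // => /(_ a0); lia.
Qed.
End Valuation.

Definition asbool (P : Prop) : bool := if excluded_middle_informative P then true else false.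

Lemma asboolP (P : Prop) : reflect P (asbool P).
Proof. by rewrite /asbool; case: excluded_middle_informative => h; constructor. Qed.

Section Ring.
Variables (K : fieldType) (R : K -> Prop) (v : K -> int).
Hypotheses (hR : is_subring R) (hv : is_normalized_discrete_valuation v).
Hypotheses (hRbar : integral_closure_is R (val_ring v)) (hrr : residually_rational R v).

Lemma Rpred0 : R 0. Proof. by case: hR. Qed.
Lemma Rpred1 : R 1. Proof. by case: hR. Qed.
Lemma RpredB a b : R a -> R b -> R (a - b). Proof. by case: hR => _ _ + _; apply. Qed.
Lemma RpredM a b : R a -> R b -> R (a * b). Proof. by case: hR => _ _ _; apply. Qed.
Lemma RpredN a : R a -> R (- a). Proof. by rewrite -sub0r; apply/RpredB/Rpred0. Qed.
Lemma RpredD a b : R a -> R b -> R (a + b).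
Proof. by move=> Ra Rb; rewrite -[b]opprK; apply/RpredB/RpredN. Qed.

Lemma Rpred_prod (I : Type) (s : seq I) (P : pred I) (F : I -> K) :
  (forall i, R (F i)) -> R (\prod_(i <- s | P i) F i).
Proof. by move=> RF; apply: (big_ind R) => //; [exact: Rpred1 | exact: RpredM]. Qed.

Lemma Rpred_sum (I : Type) (s : seq I) (P : pred I) (F : I -> K) :
  (forall i, R (F i)) -> R (\sum_(i <- s | P i) F i).
Proof. by move=> RF; apply: (big_ind R) => //; [exact: Rpred0 | exact: RpredD]. Qed.

Lemma val_ge0 a : R a -> a != 0 -> 0 <= v a.
Proof.
move=> Ra a0; suff : val_ring v a by case=> [/eqP | //]; rewrite (negbTE a0).
apply/hRbar; exists ('X - a%:P); split; rewrite ?monicXsubC ?root_XsubC //.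
move=> i; rewrite coefB coefX coefC.
by case: (i == 1)%N; case: (i == 0)%N; rewrite ?subr0 ?sub0r;
  by [exact: Rpred0 | exact: Rpred1 | apply: RpredN | apply: RpredB; [exact: Rpred1 |]].
Qed.

Lemma in_valR_ge0 n : in_valR R v n -> 0 <= n.
Proof. by case=> a [Ra a0 <-]; apply: val_ge0. Qed.

Lemma in_valR0 : in_valR R v 0.
Proof. by exists 1; split; [exact: Rpred1 | exact: oner_neq0 | exact: v1]. Qed.

Lemma in_valRD m n : in_valR R v m -> in_valR R v n -> in_valR R v (m + n).
Proof.
move=> [a [Ra a0 <-]] [b [Rb b0 <-]].
by exists (a * b); split; [exact: RpredM | exact: mulf_neq0 | exact: vM].
Qed.

Lemma high_submodule (B : int) : is_submodule R (fun z => z = 0 \/ B <= v z).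
Proof.
split; first by left.
- move=> a b [-> | va]; first by rewrite add0r.
  move=> [-> | vb]; first by rewrite addr0; right.
  have [-> | a0] := eqVneq a 0; first by rewrite add0r; right.
  have [-> | b0] := eqVneq b 0; first by rewrite addr0; right.
  have [-> | ab0] := eqVneq (a + b) 0; [by left | by right; apply: vD_ge].
- move=> r a Rr [-> | va]; first by rewrite mulr0; left.
  have [-> | r0] := eqVneq r 0; first by rewrite mul0r; left.
  have [-> | a0] := eqVneq a 0; first by rewrite mulr0; left.
  by right; rewrite vM //; have := val_ge0 Rr r0; lia.
Qed.

(* Residual rationality lets one cancel the leading term of any [w] in [M] against an
   element of [N] of the same value; iterating, [w] is pushed above [B], where it lies in [N]. *)
Lemma submodule_sub_by_values (M N : K -> Prop) (B : int) :
  is_submodule R M -> is_submodule R N ->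
  (forall z, z != 0 -> B <= v z -> N z) ->
  (forall z, M z -> z != 0 -> v z < B -> exists n, [/\ N n, M n, n != 0 & v n = v z]) ->
  subsetK M N.
Proof.
move=> [_ MD MM] [N0 ND NM] high approx.
suff bounded k w : M w -> w != 0 -> (`|B - v w| <= k)%N -> N w.
  by move=> w Mw; have [-> | w0] := eqVneq w 0; last exact: (bounded _ w Mw w0 (leqnn _)).
elim: k w => [|k IH] w Mw w0 dist; have [Bw | wB] := lerP B (v w); try exact: high.
  lia.
have [n [Nn Mn n0 vn]] := approx w Mw w0 wB.
have /hrr [a [Ra wna]] : val_ring v (w / n).
  by right; rewrite vM ?invr_eq0 // vV // vn subrr.
have -> : w = (w - a * n) + a * n by rewrite subrK.
apply: ND; last exact: NM.
have [wan0 | wan] := eqVneq (w / n - a) 0.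
  by move/eqP: wan0; rewrite subr_eq0 => /eqP <-; rewrite divfK // subrr.
have vwa : 0 < v (w / n - a) by case: wna => // /eqP; rewrite (negbTE wan).
have -> : w - a * n = n * (w / n - a) by rewrite mulrBr mulrCA mulfV ?mulr1 // mulrC.
have Mwa : M (n * (w / n - a)).
  by rewrite mulrBr mulrCA mulfV ?mulr1 // mulrC -mulNr; apply/MD/MM/Mn/RpredN.
have [Bwa | waB] := lerP B (v (n * (w / n - a))); first by apply: high; rewrite ?mulf_neq0.
apply: IH => //; first by rewrite mulf_neq0.
by move: waB; rewrite vM // vn; lia.
Qed.

Section Conductor.
Hypotheses (hK : is_quotient_field R) (hfin : finite_Rmodule R (val_ring v)).

(* A common denominator of finitely many generators of the integral closure. *)
Lemma conductor_nonzero : exists2 d, R d /\ d != 0 & forall z, val_ring v z -> R (d * z).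
Proof.
case: hfin => n [g gen].
have frac i : exists ab : K * K, [/\ R ab.1, R ab.2, ab.2 != 0 & g i = ab.1 / ab.2].
  by have [a [b [? ? ? ?]]] := hK (g i); exists (a, b).
have [f hf] := fin_all_exists frac.
exists (\prod_i (f i).2); first split.
- by apply: Rpred_prod => i; case: (hf i).
- by rewrite prodf_seq_neq0; apply/allP => i _; case: (hf i).
move=> z /gen [a [Ra ->]]; rewrite mulr_sumr; apply: Rpred_sum => i.
rewrite mulrCA (bigD1 i) //=; case: (hf i) => R1i R2i n0i ->.
rewrite mulrAC [(f i).2 * _]mulrCA mulfV // mulr1.
by apply/RpredM/RpredM => //; apply: Rpred_prod => j; case: (hf j).
Qed.

Lemma R_above_conductor (c : int) : (forall n : nat, in_valR R v (c + n%:Z)) ->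
  forall z, z != 0 -> c <= v z -> R z.
Proof.
move=> hc z z0 cz; have [d [Rd d0] dRbar] := conductor_nonzero.
apply: (submodule_sub_by_values (high_submodule c) _ (B := v d)) (or_intror cz).
- by split; [exact: Rpred0 | exact: RpredD | exact: RpredM].
- move=> w w0 dw; rewrite -(divfK d0 w) mulrC.
  apply/dRbar; right; rewrite vM ?invr_eq0 // vV //; lia.
move=> w [-> | cw] w0 _; first by rewrite eqxx in w0.
have [a [Ra a0 va]] := hc `|v w - c|%N.
by exists a; split => //; [right | ]; rewrite va; lia.
Qed.
End Conductor.

Lemma max_ideal_of_val_gt0 a : R a -> a != 0 -> 0 < v a -> max_ideal R a.
Proof.
move=> Ra a0 va; split => // -[b [Rb ab1]].
have b0 : b != 0 by apply: contra_eq_neq ab1 => ->; rewrite mulr0 eq_sym oner_neq0.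
by have := vM hv a0 b0; rewrite ab1 v1 //; have := val_ge0 Rb b0; lia.
Qed.

Section Local.
Hypothesis hloc : is_local R.

Lemma max_ideal_submodule : is_submodule R (max_ideal R).
Proof.
case: hloc => mD mM; split => //; split; first exact: Rpred0.
by case=> b [_]; rewrite mul0r => /eqP; rewrite eq_sym oner_eq0.
Qed.

(* By residual rationality [a^-1 = r0 + d] with [v d > 0], so [a * r0 = 1 - a * d] is
   [1] minus an element of the maximal ideal, hence a unit. *)
Lemma unit_of_val0 a : R a -> a != 0 -> v a = 0 -> Runit R a.
Proof.
move=> Ra a0 va; have /hrr [r0 [Rr0 hr0]] : val_ring v a^-1 by right; rewrite vV // va.
have [d0 | d_neq0] := eqVneq (a^-1 - r0) 0.
  by exists r0; split => //; move/eqP: d0; rewrite subr_eq0 => /eqP <-; rewrite mulfV.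
have vd : 0 < v (a^-1 - r0) by case: hr0 => // /eqP; rewrite (negbTE d_neq0).
have q_def : 1 - a * r0 = a * (a^-1 - r0) by rewrite mulrBr mulfV.
have mq : max_ideal R (1 - a * r0).
  apply: max_ideal_of_val_gt0; first by apply/RpredB/RpredM; [exact: Rpred1 | |].
    by rewrite q_def mulf_neq0.
  by rewrite q_def vM // va add0r.
have [[b [Rb ab1]] | nunit] := classic (Runit R (a * r0)).
  by exists (r0 * b); split; [exact: RpredM | rewrite mulrA].
have [mD _] := hloc; have /mD /(_ mq) : max_ideal R (a * r0) by split => //; exact: RpredM.
by rewrite subrKC => -[_ []]; exists 1; split; [exact: Rpred1 | rewrite mulr1].
Qed.

Lemma max_ideal_val_gt0 a : max_ideal R a -> a != 0 -> 0 < v a.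
Proof.
move=> [Ra nunit] a0; rewrite lt_def val_ge0 // andbT.
by apply/eqP => va; exact: nunit (unit_of_val0 Ra a0 va).
Qed.

Lemma colon_of_R a : R a -> colon R (max_ideal R) a.
Proof. by move=> Ra b [Rb _]; apply: RpredM. Qed.

Section Colon.
Variables (c e : int).
Hypothesis R_high : forall z, z != 0 -> c <= v z -> R z.
Hypothesis max_ideal_ge : forall a, max_ideal R a -> a != 0 -> e <= v a.

Lemma colon_of_val z : z != 0 -> c <= v z + e -> colon R (max_ideal R) z.
Proof.
move=> z0 cz a ma; have [-> | a0] := eqVneq a 0; first by rewrite mulr0; exact: Rpred0.
apply: R_high; first by rewrite mulf_neq0.
by rewrite vM //; have := max_ideal_ge ma a0; lia.
Qed.

(* An element [a] of the maximal ideal with [v a - e] in [v R] is matched by some [s * x] with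
   [s] in [R]; for the others, [f / x * a] lies above the conductor. *)
Lemma colon_div (x f : K) : max_ideal R x -> x != 0 -> v x = e ->
  R f -> f != 0 -> e <= v f ->
  (forall a, max_ideal R a -> a != 0 -> v a < c -> ~ in_valR R v (v a - e) ->
     c <= v f + v a - e) ->
  colon R (max_ideal R) (f / x).
Proof.
move=> mx x0 vx Rf f0 ef gap; have [mD mM] := hloc.
have fx0 : f / x != 0 by rewrite mulf_neq0 ?invr_eq0.
have vfx : v (f / x) = v f - e by rewrite vM ?invr_eq0 // vV // vx.
apply: (submodule_sub_by_values max_ideal_submodule (N := fun a => R (f / x * a)) (B := c)).
- split; first by rewrite mulr0; exact: Rpred0.
  + by move=> a b Ra Rb; rewrite mulrDr; apply: RpredD.
  + by move=> r a Rr Ra; rewrite mulrCA; apply: RpredM.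
- by move=> z z0 cz; apply: R_high; [rewrite mulf_neq0 | rewrite vM // vfx; lia].
move=> z mz z0 zc; have [[s [Rs s0 vs]] | apery_z] := classic (in_valR R v (v z - e)).
  exists (s * x); split; [ | exact: mM | exact: mulf_neq0 | by rewrite vM // vs vx; lia].
  by rewrite mulrCA divfK //; apply: RpredM.
exists z; split => //; apply: R_high; first by rewrite mulf_neq0.
by rewrite vM // vfx; have := gap z mz z0 zc apery_z; lia.
Qed.
End Colon.
End Local.

Definition nvals (M : K -> Prop) (n : nat) :=
  count (fun s : nat => asbool (in_valR M v s%:Z)) (iota 0 n).

Lemma eq_nvals M N n : eqK M N -> nvals M n = nvals N n.
Proof.
move=> MN; apply: eq_count => s; apply/asboolP/asboolP;
  by case=> a [Ma a0 va]; exists a; split => //; apply/MN.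
Qed.

Lemma in_valR_subset M N n : subsetK M N -> in_valR M v n -> in_valR N v n.
Proof. by move=> MN [a [Ma a0 va]]; exists a; split => //; apply: MN. Qed.

Definition maximal_in (A B : K -> Prop) :=
  forall L, is_submodule R L -> subsetK A L -> subsetK L B -> eqK L A \/ eqK L B.

Definition addK (A B : K -> Prop) (z : K) := exists a b, [/\ A a, B b & z = a + b].

Lemma submoduleD A B : is_submodule R A -> is_submodule R B -> is_submodule R (addK A B).
Proof.
move=> [A0 AD AM] [B0 BD BM]; split; first by exists 0, 0; rewrite addr0.
- move=> _ _ [a1 [b1 [Aa1 Bb1 ->]]] [a2 [b2 [Aa2 Bb2 ->]]].
  by exists (a1 + a2), (b1 + b2); rewrite addrACA; split; auto.
- by move=> r _ Rr [a [b [Aa Bb ->]]]; exists (r * a), (r * b); rewrite mulrDr; split; auto.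
Qed.

Lemma submoduleI A B : is_submodule R A -> is_submodule R B ->
  is_submodule R (fun z => A z /\ B z).
Proof.
move=> [A0 AD AM] [B0 BD BM]; split => //.
- by move=> a b [Aa Ba] [Ab Bb]; split; auto.
- by move=> r a Rr [Aa Ba]; split; auto.
Qed.

(* If [a < b] were two new values, [A + (B ∩ {v >= b})] would lie strictly between [A] and [B]. *)
Lemma new_value_unique A B a b : is_submodule R A -> is_submodule R B -> subsetK A B ->
  maximal_in A B -> in_valR B v a -> ~ in_valR A v a -> in_valR B v b -> ~ in_valR A v b ->
  a = b.
Proof.
move=> sA sB AB maxAB; wlog ab : a b / a < b => [wlog | ].
  by move=> *; case: (ltgtP a b) => [ab | ba | //]; [apply: wlog | apply/esym/wlog].
move=> [za [Bza za0 vza]] nAa [zb [Bzb zb0 vzb]] nAb; exfalso.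
pose L := addK A (fun w => B w /\ (w = 0 \/ b <= v w)).
have sL : is_submodule R L by apply/submoduleD/submoduleI/high_submodule.
have AL : subsetK A L.
  by move=> z Az; exists z, 0; rewrite addr0; split => //; split; [case: sB | left].
have LB : subsetK L B by move=> _ [n [w [An [Bw _] ->]]]; case: sB => _ BD _; apply/BD/Bw/AB.
case: (maxAB L sL AL LB) => [LA | LB'].
  apply: nAb; exists zb; split => //; apply/LA; exists 0, zb; rewrite add0r.
  by split => //; [case: sA | split => //; right; rewrite vzb].
have [n [w [An [Bw hw] za_eq]]] := (LB' za).2 Bza.
apply: nAa; have [w0 | w_neq0] := eqVneq w 0.
  by exists za; split => //; rewrite za_eq w0 addr0.
have bw : b <= v w by case: hw => // /eqP; rewrite (negbTE w_neq0).
have n_neq0 : n != 0.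
  by apply: contraTneq bw => n0; move: za_eq; rewrite n0 add0r => <-; rewrite -ltNge vza.
have w'0 : - w != 0 by rewrite oppr_eq0.
have lt_za_w : v za < v (- w) by rewrite vN // vza; lia.
have [_ vn] := vD_lt hv za0 w'0 lt_za_w.
by exists n; split => //; rewrite -vza -vn za_eq addrK.
Qed.

Lemma nvals_step_le A B n : is_submodule R A -> is_submodule R B -> subsetK A B ->
  maximal_in A B -> (nvals B n <= nvals A n + 1)%N.
Proof.
move=> sA sB AB maxAB.
rewrite /nvals (count_subpred (a := fun s : nat => asbool (in_valR A v s%:Z))).
  rewrite leq_add2l; apply: count_le1; first exact: iota_uniq.
  move=> x y _ _ /andP [/asboolP nAx /asboolP Bx] /andP [/asboolP nAy /asboolP By].
  by case: (new_value_unique sA sB AB maxAB Bx nAx By nAy).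
by move=> s /asboolP As; apply/asboolP; apply: in_valR_subset As.
Qed.

Lemma nvals_step_ge A B n : is_submodule R A -> is_submodule R B -> ssubsetK A B ->
  (forall z, z != 0 -> n%:Z <= v z -> A z) -> (forall z, B z -> z != 0 -> 0 <= v z) ->
  (nvals A n + 1 <= nvals B n)%N.
Proof.
move=> sA sB [AB nBA] Ahigh Bge0.
rewrite /nvals (count_subpred (a := fun s : nat => asbool (in_valR A v s%:Z))
  (b := fun s : nat => asbool (in_valR B v s%:Z))).
  rewrite leq_add2l -has_count; apply: contraT => /hasPn no_new; case: nBA.
  apply: submodule_sub_by_values sB sA Ahigh _ => z Bz z0 vz.
  have vz_ge0 := Bge0 z Bz z0.
  have vz_lt : (`|v z| < n)%N by lia.
  have /asboolP Bvz : in_valR B v `|v z|%N by exists z; split => //; lia.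
  have := no_new `|v z|%N; rewrite mem_iota vz_lt /= Bvz andbT negbK => /(_ isT).
  by move=> /asboolP [a [Aa a0 va]]; exists a; split => //; [apply: AB | lia].
by move=> s /asboolP As; apply/asboolP; apply: in_valR_subset As.
Qed.

Lemma length_nvals_le M N n m : length_is R M N n -> (nvals M m <= nvals N m + n)%N.
Proof.
case=> ch [ch0 chn sub_ch lt_ch max_ch].
rewrite -(eq_nvals m chn) -(eq_nvals m ch0).
elim: {-2}n (leqnn n) => [|j IH] jn; first by rewrite addn0.
have step : (nvals (ch j.+1) m <= nvals (ch j) m + 1)%N.
  apply: nvals_step_le; [apply: sub_ch; lia | exact: sub_ch | by case: (lt_ch j jn) |].
  by move=> L; exact: max_ch.
by apply: leq_trans step _; have := IH (ltnW jn); lia.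
Qed.

Lemma chain_subset (ch : nat -> K -> Prop) n :
  (forall i, (i < n)%N -> subsetK (ch i) (ch i.+1)) ->
  forall i j, (i <= j <= n)%N -> subsetK (ch i) (ch j).
Proof.
move=> sub_ch i; elim=> [|j IH] /andP [ij jn]; first by have -> : i = 0%N by lia.
have [-> // | ne_ij] := eqVneq i j.+1.
by move=> z chz; apply: sub_ch => //; apply: IH chz; lia.
Qed.

Lemma length_nvals_ge M N n m : length_is R M N n ->
  (forall z, z != 0 -> m%:Z <= v z -> N z) -> (forall z, M z -> z != 0 -> 0 <= v z) ->
  (nvals N m + n <= nvals M m)%N.
Proof.
case=> ch [ch0 chn sub_ch lt_ch max_ch] Nhigh Mge0.
have mono := chain_subset (fun i lt_in => (lt_ch i lt_in).1).
rewrite -(eq_nvals m chn) -(eq_nvals m ch0).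
elim: {-2}n (leqnn n) => [|j IH] jn; first by rewrite addn0.
have step : (nvals (ch j) m + 1 <= nvals (ch j.+1) m)%N.
  apply: nvals_step_ge; [apply: sub_ch; lia | exact: sub_ch | exact: lt_ch | | ].
  - by move=> z z0 mz; apply: (mono 0%N) ((ch0 z).2 (Nhigh z z0 mz)); lia.
  - by move=> z chz; apply: Mge0; apply/chn; apply: (mono j.+1 n) chz; lia.
by apply: leq_trans step; have := IH (ltnW jn); lia.
Qed.
End Ring.

Section Setting.
Variables (K : fieldType) (R : K -> Prop) (v : K -> int) (x : K).
Variables (c e p y1 y2 l1 l2 : int) (delta r : nat).
Hypotheses (hR : is_subring R) (hK : is_quotient_field R).
Hypotheses (hv : is_normalized_discrete_valuation v).
Hypotheses (hRbar : integral_closure_is R (val_ring v)) (hfin : finite_Rmodule R (val_ring v)).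
Hypotheses (hloc : is_local R) (hrr : residually_rational R v).
Hypothesis hc : in_valR R v c /\ (forall n : nat, in_valR R v (c + n%:Z)) /\
  (forall c', in_valR R v c' -> (forall n : nat, in_valR R v (c' + n%:Z)) -> c <= c').
Hypothesis he : 0 < e /\ in_valR R v e /\ (forall e', 0 < e' -> in_valR R v e' -> e <= e').
Hypothesis hdelta : length_is R (val_ring v) R delta.
Hypothesis hr : length_is R (colon R (max_ideal R)) R r.
Hypothesis hx : max_ideal R x /\ x != 0 /\ v x = e.
Hypothesis hp : c - e <= p * e /\ p * e < c.
Hypothesis hy : y1 < y2 /\ forall y, (in_valR R v y /\ 0 < y /\ y < c /\ ~ in_valR R v (y - e))
  <-> (y = y1 \/ y = y2).
Hypothesis hl1 : 0 <= l1 /\ y1 + l1 * e < c /\ c <= y1 + (l1 + 1) * e.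
Hypothesis hl2 : 0 <= l2 /\ y2 + l2 * e < c /\ c <= y2 + (l2 + 1) * e.

Let R_high z : z != 0 -> c <= v z -> R z.
Proof. have [_ [hcN _]] := hc; exact: (R_above_conductor hR hv hRbar hrr hK hfin hcN). Qed.

Let max_ideal_ge_e a : max_ideal R a -> a != 0 -> e <= v a.
Proof.
move=> ma a0; apply: he.2.2; first exact: (max_ideal_val_gt0 hR hv hRbar hrr hloc ma a0).
by exists a; case: ma.
Qed.

Let apery_y y : y = y1 \/ y = y2 ->
  [/\ in_valR R v y, e < y, y < c & ~ in_valR R v (y - e)].
Proof.
move=> /(hy.2 y).2 [Ry [y_gt0 [yc apery]]]; split => //.
rewrite lt_neqAle he.2.2 // andbT; apply: contra_not_neq apery => <-.
by rewrite subrr; exists 1; split; [exact: Rpred1 | exact: oner_neq0 | exact: v1].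
Qed.

(* The counting below the conductor is done in [nat]; all these numbers are nonnegative. *)
Let E := `|e|%N.
Let C := `|c|%N.
Let P := `|p|%N.
Let Y1 := `|y1|%N.
Let Y2 := `|y2|%N.
Let L1 := `|l1|%N.
Let L2 := `|l2|%N.

Let nat_casts : e = E%:Z /\ c = C%:Z /\ p = P%:Z /\ y1 = Y1%:Z /\ y2 = Y2%:Z /\
  l1 = L1%:Z /\ l2 = L2%:Z.
Proof.
have [_ e_y1 y1c _] := apery_y (or_introl erefl).
have [_ e_y2 y2c _] := apery_y (or_intror erefl).
have [e_gt0 _] := he; have [l1_ge0 _] := hl1; have [l2_ge0 _] := hl2; have [hp1 _] := hp.
have p_gt0 : 0 < p by nia.
rewrite /E /C /P /Y1 /Y2 /L1 /L2; lia.
Qed.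

Let S (s : nat) := asbool (in_valR R v s%:Z).

Let S_semigroup : [/\ S 0, S E & forall a b, S a -> S b -> S (a + b)%N].
Proof.
have [eE _] := nat_casts; split; first exact/asboolP/in_valR0.
  by apply/asboolP; rewrite -eE; exact: he.2.1.
by move=> a b /asboolP Sa /asboolP Sb; apply/asboolP; rewrite PoszD; exact: in_valRD.
Qed.

Let S_apery : [/\ forall t, S t -> (t + E != Y1)%N, forall t, S t -> (t + E != Y2)%N
  & forall s, S s -> (0 < s)%N -> (s < C)%N -> (forall t, S t -> t + E != s)%N ->
      s = Y1 \/ s = Y2].
Proof.
have [eE [cE [_ [y1E [y2E _]]]]] := nat_casts.
have not_shift t y : S t -> y = y1 \/ y = y2 -> t%:Z + e != y.
  by move=> /asboolP St /apery_y [_ _ _]; apply: contra_not_neq => <-; rewrite addrK.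
split=> [t St | t St | s /asboolP Ss s_gt0 sC apery_s].
- by apply/eqP => tE; move/eqP: (not_shift t y1 St (or_introl erefl)); apply; lia.
- by apply/eqP => tE; move/eqP: (not_shift t y2 St (or_intror erefl)); apply; lia.
suff : s%:Z = y1 \/ s%:Z = y2 by rewrite y1E y2E => -[] [->]; [left | right].
apply/(hy.2 s%:Z); do ! split => //; try lia.
move=> Ss_e; have se_ge0 := in_valR_ge0 hR hRbar Ss_e.
have Sse : S `|s%:Z - e|%N by apply/asboolP; rewrite gez0_abs.
by move/eqP: (apery_s _ Sse); apply; lia.
Qed.

Let chain_data : [/\ (0 < E < Y1)%N, (Y1 < Y2 < C)%N, S Y1, S Y2
  & [/\ (C <= P * E + E < C + E)%N, (C <= Y1 + L1 * E + E < C + E)%N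
       & (C <= Y2 + L2 * E + E < C + E)%N]].
Proof.
have [eE [cE [pE [y1E [y2E [l1E l2E]]]]]] := nat_casts.
have [[SY1 e_y1 _ _] [SY2 _ _ _]] := (apery_y (or_introl erefl), apery_y (or_intror erefl)).
have [hp1 hp2] := hp; have [_ [hl1a hl1b]] := hl1; have [_ [hl2a hl2b]] := hl2.
have [y12 _] := hy; split; [lia | lia | by apply/asboolP; rewrite -y1E | |].
  by apply/asboolP; rewrite -y2E.
by split; nia.
Qed.

Let count_values : (count S (iota 0 C) = P.+1 + L1.+1 + L2.+1 /\
  count (predU S (leq (C - E))) (iota 0 C) + 3 = P.+1 + L1.+1 + L2.+1 + E)%N.
Proof.
have [S0 SE SD] := S_semigroup; have [apery1 apery2 apery_below] := S_apery.
have [/andP [E_gt0 E_Y1] /andP [Y12 Y2C] SY1 SY2 [top0 top1 top2]] := chain_data.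
have Y1_gt0 := ltn_trans E_gt0 E_Y1.
split; first exact: (count_S S0 SE SD E_gt0 SY1 SY2 Y1_gt0 Y12 apery1 apery2 apery_below
  top0 top1 top2).
apply: (count_S_or_top S0 SE SD E_gt0 SY1 SY2 Y1_gt0 Y12 apery1 apery2 apery_below
  top0 top1 top2); lia.
Qed.

Lemma delta_eq : delta%:Z = c - (p + 1 + (l1 + l2 + 2)).
Proof.
have [eE [cE [pE [y1E [y2E [l1E l2E]]]]]] := nat_casts.
have [count_R _] := count_values.
have nvals_Rbar : nvals v (val_ring v) C = C.
  have [_ _ [t [t0 vt]]] := hv.
  rewrite /nvals (eq_count (a2 := predT)) ?count_predT ?size_iota // => s.
  apply/asboolP; exists (t ^+ s); split; first (by right; rewrite vX // vt);
    rewrite ?expf_neq0 ?vX // vt; lia.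
have le := length_nvals_le hR hv hRbar C hdelta.
have ge : (nvals v R C + delta <= nvals v (val_ring v) C)%N.
  apply: (length_nvals_ge hR hv hrr hdelta) => [z z0 cz | z [-> | //]]; last by rewrite eqxx.
  by apply: R_high z0 _; rewrite cE.
move: le ge; rewrite nvals_Rbar /nvals -/S count_R; lia.
Qed.

Let apery_in_colon y : y = y1 \/ y = y2 -> c <= y + y1 - e ->
  in_valR (colon R (max_ideal R)) v (y - e).
Proof.
move=> y12 cy; have [[f [Rf f0 vf]] e_y _ _] := apery_y y12.
have [mx [x0 vx]] := hx.
exists (f / x); rewrite mulf_neq0 ?invr_eq0 // vM ?invr_eq0 // vV // vf vx; split => //.
apply: (colon_div hR hv hrr hloc R_high mx x0 vx Rf f0); first by rewrite vf ltW.
move=> a ma a0 ac apery_a; have [Ra _] := ma.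
have /(hy.2 (v a)).1 [-> | ->] : in_valR R v (v a) /\ 0 < v a /\ v a < c /\ ~ in_valR R v (v a - e).
  by do ! split => //; [exists a | exact: (max_ideal_val_gt0 hR hv hRbar hrr hloc ma a0)].
all: by rewrite vf; have := hy.1; lia.
Qed.

(* [r >= e - 3 + size A], stated without truncated subtraction. *)
Let r_lower (A : seq nat) : uniq A -> {subset A <= [:: Y1 - E; Y2 - E]%N} ->
  (forall a, a \in A -> in_valR (colon R (max_ideal R)) v a%:Z) -> (E + size A <= r + 3)%N.
Proof.
move=> uA sub_A colon_A.
have [eE [cE [pE [y1E [y2E [l1E l2E]]]]]] := nat_casts.
have [_ e_y1 y1c apery1] := apery_y (or_introl erefl).
have [_ e_y2 y2c apery2] := apery_y (or_intror erefl).
have [count_R count_U] := count_values.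
have le := length_nvals_le hR hv hRbar C hr; rewrite /nvals -/S count_R in le.
have new_A : count (predI (predU S (leq (C - E))) (mem A)) (iota 0 C) = 0%N.
  apply/eqP; rewrite eqn0Ngt -has_count; apply/hasPn => s _; apply/negP => /andP [].
  case/orP => [/asboolP Ss | Cs] /sub_A; rewrite !inE => /orP [] /eqP es.
  - by apply: apery1; rewrite (_ : y1 - e = s) //; lia.
  - by apply: apery2; rewrite (_ : y2 - e = s) //; lia.
  - lia.
  - lia.
have count_A : count (mem A) (iota 0 C) = size A.
  apply: count_mem_subset; rewrite ?iota_uniq // => a /sub_A; rewrite !inE mem_iota.
  by case/orP => /eqP ->; lia.
have : (count (predU (predU S (leq (C - E))) (mem A)) (iota 0 C)
         <= nvals v (colon R (max_ideal R)) C)%N.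
  apply: sub_count => s /orP [/orP [/asboolP Ss | Cs] | As]; apply/asboolP.
  - by have [a [Ra a0 va]] := Ss; exists a; split => //; exact: colon_of_R.
  - have [_ _ [t [t0 vt]]] := hv.
    exists (t ^+ s); rewrite vX // vt mulr1 expf_neq0 //; split => //.
    apply: (colon_of_val hR hv R_high max_ideal_ge_e); rewrite ?expf_neq0 // vX // vt; lia.
  - exact: colon_A.
have := count_predUI (predU S (leq (C - E))) (mem A) (iota 0 C).
move: count_U; rewrite new_A count_A /nvals; lia.
Qed.

Lemma e_sub2_le_r : c <= y2 + y1 - e -> e - 2 <= r%:Z.
Proof.
move=> cy; have [eE [_ [_ [_ [y2E _]]]]] := nat_casts.
have [_ e_y2 _ _] := apery_y (or_intror erefl).
have colon_A a : a \in [:: (Y2 - E)%N] -> in_valR (colon R (max_ideal R)) v a%:Z.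
  by rewrite inE => /eqP ->; rewrite (_ : _%:Z = y2 - e); [apply: apery_in_colon; auto | lia].
have sub_A : {subset [:: (Y2 - E)%N] <= [:: Y1 - E; Y2 - E]%N}.
  by move=> a; rewrite !inE orbC => ->.
by have := @r_lower [:: (Y2 - E)%N] isT sub_A colon_A; rewrite /=; lia.
Qed.

Lemma e_sub1_le_r : c <= y1 + y1 - e -> e - 1 <= r%:Z.
Proof.
move=> cy; have [eE [_ [_ [y1E [y2E _]]]]] := nat_casts.
have [_ e_y1 _ _] := apery_y (or_introl erefl); have y12 := hy.1.
have colon_A a : a \in [:: Y1 - E; Y2 - E]%N -> in_valR (colon R (max_ideal R)) v a%:Z.
  rewrite !inE => /orP [] /eqP ->.
  - by rewrite (_ : _%:Z = y1 - e); [apply: apery_in_colon; auto | lia].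
  - by rewrite (_ : _%:Z = y2 - e); [apply: apery_in_colon; auto; lia | lia].
have uA : uniq [:: Y1 - E; Y2 - E]%N by rewrite /= inE andbT; apply/eqP; lia.
by have := r_lower uA (fun a => id) colon_A; rewrite /=; lia.
Qed.
End Setting.

Theorem lemma2p4 (K : fieldType) (R : K -> Prop) (v : K -> int)
    (x : K) (c e p y1 y2 l1 l2 : int) (delta r k : nat)
  (hR : is_subring R) (hK : is_quotient_field R)
  (hv : is_normalized_discrete_valuation v)
  (hRbar : integral_closure_is R (val_ring v))
  (hfin : finite_Rmodule R (val_ring v))
  (hloc : is_local R)
  (hnreg : ~ regular_dim1 R)
  (hrr : residually_rational R v)
  (hc : in_valR R v c /\ (forall n : nat, in_valR R v (c + n%:Z)) /\
        (forall c', in_valR R v c' -> (forall n : nat, in_valR R v (c' + n%:Z)) -> c <= c'))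
  (he : 0 < e /\ in_valR R v e /\ (forall e', 0 < e' -> in_valR R v e' -> e <= e'))
  (hdelta : length_is R (val_ring v) R delta)
  (hr : length_is R (colon R (max_ideal R)) R r)
  (hx : max_ideal R x /\ x != 0 /\ v x = e)
  (hk : length_is R R (sum_C_xR R (colon R (val_ring v)) x) k)
  (hp : c - e <= p * e /\ p * e < c)
  (hy : y1 < y2 /\ forall y, (in_valR R v y /\ 0 < y /\ y < c /\ ~ in_valR R v (y - e))
                              <-> (y = y1 \/ y = y2))
  (hl1 : 0 <= l1 /\ y1 + l1 * e < c /\ c <= y1 + (l1 + 1) * e)
  (hl2 : 0 <= l2 /\ y2 + l2 * e < c /\ c <= y2 + (l2 + 1) * e)
  (hk3 : k = 3%N) :
  let h := (p + 1) * e - c in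
  let b := (c - delta%:Z) * r%:Z - delta%:Z in
  let L := l1 + l2 + 2 in
  [/\ (r%:Z = e - 3 ->
         [/\ b = L * (e - 2) + h - 2 * (p + 1),
             (p < L -> b >= L * (e - 4) + h /\ h >= 0)
           & (p = L -> b = L * (e - 4) + h - 2 /\ h > 0)]),
      (r%:Z = e - 2 ->
         [/\ b = L * (e - 1) + h - p - 1, p <= 2 * l1 + 2
           & (p = 2 * l1 + 2 -> h > 0)])
    & (r%:Z = e - 1 -> b = L * e + h)].
Proof.
(* [k = 3] enters only through [hy]: there are exactly two Apery elements [y1 < y2] below [c]. *)
move=> h b L.
have delta_val := delta_eq hR hK hv hRbar hfin hrr hc he hdelta hx hp hy hl1 hl2.
have r_y2 := e_sub2_le_r hR hK hv hRbar hfin hloc hrr hc he hr hx hp hy hl1 hl2.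
have r_y1 := e_sub1_le_r hR hK hv hRbar hfin hloc hrr hc he hr hx hp hy hl1 hl2.
have [[_ [_ c_y1]] [_ [_ c_y2]]] := (hl1, hl2); have [hp1 hp2] := hp.
rewrite {}/b {}/h {}/L delta_val; split=> r_val; rewrite r_val.
- split; [ring | lia | move=> pL; split; first by rewrite pL; ring].
  rewrite ltNge; apply/negP => h_le0; suff : c <= y2 + y1 - e by move/r_y2; lia.
  lia.
- split; first ring.
  + rewrite leNgt; apply/negP => lt_p; suff : c <= y1 + y1 - e by move/r_y1; lia.
    have : (2 * l1 + 3) * e <= p * e by rewrite ler_pM2r //; lia.
    lia.
  + move=> p_val; rewrite ltNge; apply/negP => h_le0.
    suff : c <= y1 + y1 - e by move/r_y1; lia.
    lia.
- ring.
Qed.
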